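(* For $n\ge2$ and all $P,Q\in\Gamma_n$, $D_{h\Delta}(P\|Q)\le 3D_{hI}(P\|Q)$.
   Context: $\Gamma_n=\{P=(p_1,\dots,p_n): p_i>0,\ \sum p_i=1\}$. $h(P\|Q)=\frac12\sum_{i=1}^n(\sqrt{p_i}-\sqrt{q_i})^2$; $\Delta(P\|Q)=\sum_{i=1}^n\frac{(p_i-q_i)^2}{p_i+q_i}$; $I(P\|Q)=\frac12\Big[\sum_{i=1}^n p_i\ln\frac{2p_i}{p_i+q_i}+\sum_{i=1}^n q_i\ln\frac{2q_i}{p_i+q_i}\Big]$. $D_{h\Delta}=h-\frac14\Delta$, $D_{hI}=h-I$. *)

From Stdlib Require Import Reals.
Open Scope R_scope.

Fixpoint fsum (n : nat) (f : nat -> R) : R :=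
  match n with
  | O => 0
  | S m => fsum m f + f m
  end.

Definition Gamma (n : nat) (P : nat -> R) : Prop :=
  (forall i, (i < n)%nat -> 0 < P i) /\ fsum n P = 1.

Definition hellinger (n : nat) (P Q : nat -> R) : R :=
  / 2 * fsum n (fun i => (sqrt (P i) - sqrt (Q i)) ^ 2).

Definition triangular (n : nat) (P Q : nat -> R) : R :=
  fsum n (fun i => (P i - Q i) ^ 2 / (P i + Q i)).

Definition jensen_shannon (n : nat) (P Q : nat -> R) : R :=
  / 2 * (fsum n (fun i => P i * ln (2 * P i / (P i + Q i)))
       + fsum n (fun i => Q i * ln (2 * Q i / (P i + Q i)))).

Definition D_hDelta (n : nat) (P Q : nat -> R) : R :=
  hellinger n P Q - / 4 * triangular n P Q.

Definition D_hI (n : nat) (P Q : nat -> R) : R :=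
  hellinger n P Q - jensen_shannon n P Q.

From Stdlib Require Import Reals Lra Psatz.
From Coquelicot Require Import Coquelicot.
Open Scope R_scope.

(* [3 D_hI - D_hDelta] is the sum of the terms [gap (P i) (Q i)], and [gap p q]
   is nonnegative for all [p, q > 0].  With [p = a^2], [q = b^2] and [b] fixed,
   [gap_sq b a] vanishes at [a = b] and has derivative [a * gap_sq_slope b a],
   where the slope vanishes at [b] and is nondecreasing because its derivative is
   [2 b (a - b)^4 (a^2 + a b + b^2) / (a^2 (a^2 + b^2)^3)].  So [gap_sq b]
   decreases up to [b] and increases after it. *)

Lemma fsum_nonneg (n : nat) (f : nat -> R) :
  (forall i, (i < n)%nat -> 0 <= f i) -> 0 <= fsum n f.
Proof.
  induction n as [|n IH]; simpl; intros Hf; [lra|].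
  assert (0 <= fsum n f) by (apply IH; intros; apply Hf; lia).
  assert (0 <= f n) by (apply Hf; lia).
  lra.
Qed.

Lemma nondecreasing_of_deriv_nonneg (f df : R -> R) (x y : R) :
  x <= y ->
  (forall t, x <= t <= y -> is_derive f t (df t)) ->
  (forall t, x <= t <= y -> 0 <= df t) ->
  f x <= f y.
Proof.
  intros Hxy Hf Hdf.
  destruct (MVT_gen f x y df) as [c [Hc Hmvt]];
    rewrite ?Rmin_left, ?Rmax_right in * by lra.
  - intros t Ht; apply Hf; lra.
  - intros t Ht; apply continuity_pt_filterlim.
    apply (ex_derive_continuous (V := R_NormedModule)).
    exists (df t); apply Hf; lra.
  - assert (0 <= df c * (y - x)) by (apply Rmult_le_pos; [apply Hdf|]; lra).
    lra.
Qed.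

Lemma min_of_deriv_sign_change (f df : R -> R) (b : R) :
  0 < b ->
  (forall t, 0 < t -> is_derive f t (df t)) ->
  (forall t, 0 < t <= b -> df t <= 0) ->
  (forall t, b <= t -> 0 <= df t) ->
  forall a, 0 < a -> f b <= f a.
Proof.
  intros Hb Hf Hneg Hpos a Ha.
  destruct (Rle_dec a b) as [Hab|Hab].
  - enough (- f a <= - f b) by lra.
    apply (nondecreasing_of_deriv_nonneg (fun t => - f t) (fun t => - df t)); [lra| |].
    + intros t Ht; apply (is_derive_opp (V := R_NormedModule) f), Hf; lra.
    + intros t Ht; enough (df t <= 0) by lra; apply Hneg; lra.
  - apply (nondecreasing_of_deriv_nonneg f df); [lra| |].
    + intros t Ht; apply Hf; lra.
    + intros t Ht; apply Hpos; lra.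
Qed.

Definition gap (p q : R) : R :=
  (sqrt p - sqrt q) ^ 2 + / 4 * ((p - q) ^ 2 / (p + q))
  - 3 / 2 * (p * ln (2 * p / (p + q)) + q * ln (2 * q / (p + q))).

Definition gap_sq (b a : R) : R :=
  (a - b) ^ 2 + (a * a - b * b) ^ 2 / (4 * (a * a + b * b))
  - 3 / 2 * (a * a * ln (2 * (a * a) / (a * a + b * b))
             + b * b * ln (2 * (b * b) / (a * a + b * b))).

Definition gap_sq_slope (b a : R) : R :=
  2 * (a - b) / a
  + (a * a - b * b) * (a * a + 3 * (b * b)) / (2 * ((a * a + b * b) * (a * a + b * b)))
  - 3 * ln (2 * (a * a) / (a * a + b * b)).

Section GapSq.

Variable b : R.
Hypothesis b_pos : 0 < b.

Lemma gap_sq_slope_deriv (a : R) : 0 < a ->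
  is_derive (gap_sq_slope b) a
    (2 * b * (a - b) ^ 4 * (a * a + a * b + b * b) / (a * a * (a * a + b * b) ^ 3)).
Proof.
  intros Ha; unfold gap_sq_slope.
  assert (0 < a * a + b * b) by nra.
  auto_derive.
  - repeat split; try nra.
    apply Rmult_lt_0_compat; [|apply Rinv_0_lt_compat]; nra.
  - field; repeat split; nra.
Qed.

Lemma gap_sq_slope_nondecreasing (x y : R) :
  0 < x -> x <= y -> gap_sq_slope b x <= gap_sq_slope b y.
Proof.
  intros Hx Hxy.
  eapply nondecreasing_of_deriv_nonneg; [exact Hxy| |].
  - intros t Ht; apply gap_sq_slope_deriv; lra.
  - intros t Ht.
    assert (0 <= (t - b) ^ 4)
      by (change 4%nat with (2 * 2)%nat; rewrite pow_mult; apply pow2_ge_0).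
    assert (0 < t * t * (t * t + b * b) ^ 3)
      by (apply Rmult_lt_0_compat; [nra | apply pow_lt; nra]).
    apply Rmult_le_pos; [| left; apply Rinv_0_lt_compat; assumption].
    apply Rmult_le_pos; nra.
Qed.

Lemma gap_sq_slope_at_b : gap_sq_slope b b = 0.
Proof.
  unfold gap_sq_slope.
  replace (2 * (b * b) / (b * b + b * b)) with 1 by (field; nra).
  rewrite ln_1; field; nra.
Qed.

Lemma gap_sq_deriv (a : R) : 0 < a -> is_derive (gap_sq b) a (a * gap_sq_slope b a).
Proof.
  intros Ha; unfold gap_sq, gap_sq_slope.
  assert (0 < a * a + b * b) by nra.
  auto_derive.
  - repeat split; try nra;
      apply Rmult_lt_0_compat; try apply Rinv_0_lt_compat; nra.
  - unfold Rdiv; field; repeat split; nra.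
Qed.

Lemma gap_sq_at_b : gap_sq b b = 0.
Proof.
  unfold gap_sq.
  replace (2 * (b * b) / (b * b + b * b)) with 1 by (field; nra).
  rewrite ln_1; field; nra.
Qed.

Lemma gap_sq_nonneg (a : R) : 0 < a -> 0 <= gap_sq b a.
Proof.
  intros Ha; rewrite <- gap_sq_at_b at 1; revert a Ha.
  apply (min_of_deriv_sign_change _ (fun t => t * gap_sq_slope b t)); [exact b_pos| | |].
  - exact gap_sq_deriv.
  - intros t Ht.
    assert (gap_sq_slope b t <= 0) by
      (rewrite <- gap_sq_slope_at_b; apply gap_sq_slope_nondecreasing; lra).
    nra.
  - intros t Ht.
    assert (0 <= gap_sq_slope b t) by
      (rewrite <- gap_sq_slope_at_b; apply gap_sq_slope_nondecreasing; lra).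
    nra.
Qed.

End GapSq.

Lemma gap_nonneg (p q : R) : 0 < p -> 0 < q -> 0 <= gap p q.
Proof.
  intros Hp Hq.
  assert (Ha : 0 < sqrt p) by (apply sqrt_lt_R0; lra).
  assert (Hb : 0 < sqrt q) by (apply sqrt_lt_R0; lra).
  replace (gap p q) with (gap_sq (sqrt q) (sqrt p)).
  - apply gap_sq_nonneg; assumption.
  - unfold gap, gap_sq; rewrite !sqrt_sqrt by lra; field; lra.
Qed.

Lemma triple_D_hI_sub_D_hDelta (n : nat) (P Q : nat -> R) :
  3 * D_hI n P Q - D_hDelta n P Q = fsum n (fun i => gap (P i) (Q i)).
Proof.
  unfold D_hI, D_hDelta, hellinger, triangular, jensen_shannon, gap.
  induction n as [|n IH]; cbn [fsum]; [ring|].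
  rewrite <- IH; lra.
Qed.

Theorem proposition5p2 (n : nat) (P Q : nat -> R) :
  (2 <= n)%nat -> Gamma n P -> Gamma n Q ->
  D_hDelta n P Q <= 3 * D_hI n P Q.
Proof.
  intros _ [HP _] [HQ _].
  enough (0 <= 3 * D_hI n P Q - D_hDelta n P Q) by lra.
  rewrite triple_D_hI_sub_D_hDelta.
  apply fsum_nonneg; intros i Hi.
  apply gap_nonneg; auto.
Qed.
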